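(* Let $T$ be a tree on $n\ge 3$ vertices. Then $$\frac{2}{n-1}\le \gamma(T)\le \frac{n}{2n-3}.$$ Equality holds in the lower bound if and only if $T$ is isomorphic to the path $P_n$, and equality holds in the upper bound if and only if $T$ is isomorphic to the star $S_n$.
   Context: For a finite simple undirected graph $G$ with $n$ vertices, let $\mathcal{F}=\{x\in\mathbb{R}^{V(G)} : \sum_{v} x_v = 0,\ \|x\|_\infty = 1\}$, for $x\in\mathcal{F}$ let $\gamma_x(G)=\max_{uv\in E(G)}|x_u-x_v|$, and $\gamma(G)=\min_{x\in\mathcal{F}}\gamma_x(G)$. The star $S_n$ is the tree on $n$ vertices with one vertex adjacent to all other $n-1$ vertices. *)

From mathcomp Require Import all_boot all_order all_algebra.
From mathcomp Require Import classical_sets reals.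
Set Implicit Arguments. Unset Strict Implicit. Unset Printing Implicit Defensive.
Import Order.TTheory GRing.Theory Num.Theory.
Local Open Scope ring_scope.
Local Open Scope classical_set_scope.

(* A finite simple undirected graph is a symmetric irreflexive [e : rel T]
   on a finite vertex type [T]; the vertex set is [T], n = #|T|. *)
Definition simple_graph (T : finType) (e : rel T) : Prop :=
  symmetric e /\ irreflexive e.

Definition connected_graph (T : finType) (e : rel T) : Prop :=
  forall x y : T, connect e x y.

Definition acyclic_graph (T : finType) (e : rel T) : Prop :=
  forall c : seq T, (3 <= size c)%N -> ~ ucycle e c.

Definition is_tree (T : finType) (e : rel T) : Prop :=
  simple_graph e /\ connected_graph e /\ acyclic_graph e.

Definition path_rel (n : nat) : rel 'I_n :=
  fun i j => (i.+1 == j :> nat) || (j.+1 == i :> nat).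

Definition star_rel (n : nat) : rel 'I_n :=
  fun i j => (val i == 0%N) != (val j == 0%N).

Definition graph_iso (T U : finType) (e : rel T) (f : rel U) : Prop :=
  exists g : T -> U, bijective g /\ forall x y : T, f (g x) (g y) = e x y.

Definition supnorm (R : realType) (T : finType) (x : T -> R) : R :=
  \big[Num.max/0]_(v : T) `|x v|.

Definition feasible (R : realType) (T : finType) (x : T -> R) : Prop :=
  \sum_(v : T) x v = 0 /\ supnorm x = 1.

Definition gamma_x (R : realType) (T : finType) (e : rel T) (x : T -> R) : R :=
  \big[Num.max/0]_(p : T * T | e p.1 p.2) `|x p.1 - x p.2|.

(* gamma(G) = min_{x in F} gamma_x(G), taken as the infimum (the minimum
   is attained by compactness, so both agree). *)
Definition gamma (R : realType) (T : finType) (e : rel T) : R :=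
  inf [set gamma_x e x | x in [set x : T -> R | feasible x]].

Arguments path_rel n : clear implicits.
Arguments star_rel n : clear implicits.

(* Flip the sign of a feasible x so that x p = 1 where |x| is maximal, and put
   g = gamma_x(x); values then drop by at most g along each edge.  Growing an
   ordering of the vertices from p, each new vertex adjacent to an earlier one,
   the k-th vertex has value at least 1 - k g, hence 0 = sum x >= n - g C(n,2),
   i.e. g >= n / C(n,2) = 2/(n-1).  The bound improves by g as soon as a new
   vertex can be attached to a vertex other than the last one; if this never
   happens the ordering is an induced Hamiltonian path, so the graph is P_n.
   Upper bounds come from x = 1 - c g for an integer level function c that
   changes by at most 1 along edges, with g = n / sum c: levels 0, 1, 2 at a
   leaf, its neighbour b and all other vertices give n/(2n-3).  If b is not
   adjacent to some f, raising f to level 3 gives n/(2n-2); otherwise the tree is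
   the star, where every vertex lies within distance 2 of p and the same count
   (now as a lower bound) gives exactly n/(2n-3). *)

From mathcomp Require Import all_boot all_order all_algebra.
From mathcomp Require Import perm boolp classical_sets reals.
From mathcomp Require Import lra zify.

Set Implicit Arguments. Unset Strict Implicit. Unset Printing Implicit Defensive.
Import Order.TTheory GRing.Theory Num.Theory.
Local Open Scope ring_scope.

Lemma bin2_mul2 n : ('C(n, 2) * 2 = n * n.-1)%N.
Proof. by elim: n => // n IHn; rewrite binS bin1 mulnDl IHn; case: n {IHn} => //= n; lia. Qed.

Lemma bin2_div (R : numFieldType) n : (1 < n)%N -> n%:R / 'C(n, 2)%:R = 2 / (n.-1)%:R :> R.
Proof.
move=> n1; have := congr1 (GRing.natmul (1 : R)) (bin2_mul2 n); rewrite !natrM => CE.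
have n0 : n%:R != 0 :> R by rewrite pnatr_eq0 -lt0n ltnW.
have n10 : (n.-1)%:R != 0 :> R by rewrite pnatr_eq0 -lt0n -ltnS prednK // ltnW.
have C0 : 'C(n, 2)%:R != 0 :> R by rewrite pnatr_eq0 -lt0n bin_gt0.
by apply/eqP; rewrite eqr_div // -CE mulrC.
Qed.

Lemma natr_binS2 (R : pzSemiRingType) k : 'C(k.+1, 2)%:R = 'C(k, 2)%:R + k%:R :> R.
Proof. by rewrite binS bin1 natrD. Qed.

Lemma ltr_div_nat (R : realFieldType) (m k l : nat) :
  (0 < m)%N -> (0 < k < l)%N -> m%:R / l%:R < m%:R / k%:R :> R.
Proof.
move=> m0 /andP[k0 kl]; rewrite ltr_pM2l ?ltr0n // ltf_pV2 ?posrE ?ltr0n //.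
  by rewrite ltr_nat.
exact: leq_trans kl.
Qed.

Section Objective.
Variables (R : realType) (T : finType) (e : rel T).

Lemma gamma_x_ge0 (x : T -> R) : 0 <= gamma_x e x.
Proof. exact: bigmax_ge_id. Qed.

Lemma le_gamma_x (x : T -> R) a b : e a b -> `|x a - x b| <= gamma_x e x.
Proof.
move=> eab; apply: (@le_bigmax_cond _ _ _ 0 (a, b) (fun p : T * T => e p.1 p.2)
  (fun p : T * T => `|x p.1 - x p.2|)) => //.
Qed.

Lemma gamma_x_le (x : T -> R) r : 0 <= r ->
  (forall a b, e a b -> `|x a - x b| <= r) -> gamma_x e x <= r.
Proof. by move=> r0 xr; apply: bigmax_le => // -[a b] /= /xr. Qed.

Lemma gamma_le (x : T -> R) : feasible x -> gamma R e <= gamma_x e x.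
Proof.
move=> fx; apply: ge_inf; last by exists x.
by exists 0 => _ [y _ <-]; exact: gamma_x_ge0.
Qed.

Lemma gamma_ge (x0 : T -> R) r : feasible x0 ->
  (forall x : T -> R, feasible x -> r <= gamma_x e x) -> r <= gamma R e.
Proof.
move=> fx0 rx; apply: lb_le_inf; first by exists (gamma_x e x0), x0.
by move=> _ [x fx <-]; exact: rx.
Qed.

Lemma gamma_x_lip (y : T -> R) a b : e a b -> y a - gamma_x e y <= y b.
Proof. by move/(le_gamma_x y); rewrite ler_norml => /andP[_]; rewrite lerBlDl addrC -lerBlDl. Qed.

Lemma feasible_normalize (x : T -> R) : feasible x -> exists (y : T -> R) p,
  [/\ y p = 1, \sum_v y v = 0 & gamma_x e y = gamma_x e x].
Proof.
case=> sx nx; case: (pickP (@predT T)) => [v0 _|T0]; last first.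
  by move: nx; rewrite /supnorm big_pred0 // => /esym/eqP; rewrite oner_eq0.
have [p _ xp] := @eq_bigmax _ _ T 0 v0 predT (fun v => `|x v|) isT (fun _ _ => normr_ge0 _).
move: nx; rewrite /supnorm xp => {}xp.
exists (fun v => x p * x v), p; split.
- by rewrite -expr2 -real_normK ?num_real // xp expr1n.
- by rewrite -mulr_sumr sx mulr0.
- by apply: eq_bigr => -[a b] _; rewrite -mulrBr normrM xp mul1r.
Qed.

Hypothesis esym : symmetric e.

Lemma level_feasible (c : T -> nat) u k :
  c u = 0%N -> (\sum_v c v)%N = k -> (0 < k)%N -> (forall v, c v * #|T| <= 2 * k)%N ->
  (forall a b, e a b -> c b <= (c a).+1)%N ->
  exists x : T -> R, feasible x /\ gamma_x e x <= #|T|%:R / k%:R.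
Proof.
move=> cu sc k0 c2 ce; set g : R := #|T|%:R / k%:R.
have g0 : 0 <= g by rewrite divr_ge0.
have k0R : k%:R != 0 :> R by rewrite pnatr_eq0 -lt0n.
have cg2 v : (c v)%:R * g <= 2.
  by rewrite mulrA ler_pdivrMr ?ltr0n // -natrM -(natrM _ 2) ler_nat.
exists (fun v => 1 - (c v)%:R * g); split; first split.
- rewrite sumrB sumr_const -mulr_suml -natr_sum sc /g mulrC mulfVK //.
  by rewrite -mulr_natl mulr1 subrr.
- apply/le_anti/andP; split.
    apply: bigmax_le => // v _; have := cg2 v.
    have : 0 <= (c v)%:R * g by rewrite mulr_ge0.
    by move=> *; rewrite ler_norml; apply/andP; split; lra.
  by apply: le_trans (le_bigmax _ _ u); rewrite cu mul0r subr0 normr1.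
- apply: gamma_x_le => // a b eab.
  have cab : (c b)%:R <= (c a)%:R + 1 :> R by rewrite natr1 ler_nat ce.
  have cba : (c a)%:R <= (c b)%:R + 1 :> R by rewrite natr1 ler_nat ce // esym.
  rewrite opprB addrC addrA subrK -mulrBl normrM (ger0_norm g0) ler_piMl //.
  by rewrite ler_norml; apply/andP; split; lra.
Qed.

End Objective.

Section Graph.
Variables (T : finType) (e : rel T).

Lemma exists_notin (s : seq T) : (size s < #|T|)%N -> exists v, v \notin s.
Proof.
move=> lt; apply/existsP; apply: contraLR lt => /existsPn ins.
rewrite -leqNgt (leq_trans _ (card_size s)) // subset_leq_card //.
by apply/fintype.subsetP => v _; have := ins v; rewrite negbK.
Qed.

Lemma connect_cross (S : {pred T}) a b : connect e a b -> a \in S -> b \notin S ->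
  exists s w, [/\ s \in S, w \notin S & e s w].
Proof.
case/connectP => p; elim: p a => [|y p IHp] a /=; first by move=> _ -> ->.
case/andP=> eay pp lb aS bS; case: (boolP (y \in S)) => yS; first exact: IHp yS bS.
by exists a, y.
Qed.

Lemma exists_neighbour v : connected_graph e -> (1 < #|T|)%N -> exists w, e v w.
Proof.
move=> econ n2; have [w wv] := @exists_notin [:: v] n2.
have [s [w' [/[!inE]/eqP -> _ evw']]] := connect_cross (econ v w) (mem_head v [::]) wv.
by exists w'.
Qed.

Definition upath a p := path e a p && uniq (a :: p).

Lemma upath_size a p : upath a p -> (size p < #|T|)%N.
Proof. by case/andP=> _ /card_uniqP /= <-; exact: max_card. Qed.

Lemma longest_upath a b : a != b -> e a b -> exists c d q, upath c (d :: q) /\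
  forall c' r, upath c' r -> (size r <= (size q).+1)%N.
Proof.
move=> ab eab; pose P k := [exists c, exists t : k.-tuple T, upath c t].
have uab : upath a [:: b] by rewrite /upath /= eab !inE ab.
have P1 : P 1%N by apply/existsP; exists a; apply/existsP; exists [tuple b].
have ubP k : P k -> (k <= #|T|)%N.
  by case/existsP=> c /existsP[t /upath_size]; rewrite size_tuple => /ltnW.
case: (ex_maxnP (ex_intro P _ P1) ubP) => k /existsP[c /existsP[t ut]] kmax.
have {}kmax c' r : upath c' r -> (size r <= k)%N.
  by move=> ur; apply: kmax; apply/existsP; exists c'; apply/existsP; exists (in_tuple r).
case: t ut kmax => -[|d q] /= /eqP <- ut kmax; first by have := kmax _ _ uab.
by exists c, d, q.
Qed.

Hypotheses (esym : symmetric e) (eirr : irreflexive e) (eacy : acyclic_graph e).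

Lemma upath_no_chord a p i : upath a p -> (0 < i < size p)%N -> ~~ e a (nth a p i).
Proof.
case/andP=> pp up /andP[i0 ip]; apply/negP => ea.
apply: (eacy (c := a :: take i.+1 p)); first by rewrite /= size_takel //; lia.
apply/andP; split.
  by rewrite /cycle rcons_path take_path //= (take_nth a ip) last_rcons esym.
case/andP: up => ap up /=; rewrite take_uniq // andbT.
by apply: contra ap; apply: mem_take.
Qed.

Lemma triangle_free b x y : e b x -> e b y -> ~~ e x y.
Proof.
move=> ebx eby; apply/negP => exy.
have bx : b != x by apply: contraTneq ebx => ->; rewrite eirr.
have b_y : b != y by apply: contraTneq eby => ->; rewrite eirr.
have xy : x != y by apply: contraTneq exy => ->; rewrite eirr.
apply: (eacy (c := [:: b; x; y])) => //.
by rewrite /ucycle /= ebx exy esym eby /= !inE negb_or bx b_y xy.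
Qed.

Lemma exists_leaf : connected_graph e -> (1 < #|T|)%N ->
  exists a b, e a b /\ forall w, e a w -> w = b.
Proof.
move=> econ n2; have [v _] := @exists_notin [::] (ltnW n2).
have [w evw] := exists_neighbour v econ n2.
have vw : v != w by apply: contraTneq evw => ->; rewrite eirr.
have [a [b [q [up qmax]]]] := longest_upath vw evw.
exists a, b; split; first by case/andP: up => /andP[].
move=> w' eaw; have wbq : w' \in b :: q.
  apply: contraT => wbq; have wa : w' != a by apply: contraTneq eaw => ->; rewrite eirr.
  have : upath w' [:: a, b & q].
    case/andP: up => pp uu; apply/andP; split; first by rewrite /= esym eaw.
    by rewrite cons_uniq inE negb_or wa wbq uu.
  by move/qmax; rewrite ltnn.
have := index_mem w' (b :: q); rewrite wbq => ilt.
case: (posnP (index w' (b :: q))) => [i0|ipos]; first by rewrite -(nth_index b wbq) i0.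
have := @upath_no_chord a (b :: q) (index w' (b :: q)) up.
by rewrite ipos ilt nth_index // eaw => /(_ isT).
Qed.

End Graph.

Section Paths.
Variables (T : finType) (e : rel T).

Lemma mem_uniq_full (s : seq T) : uniq s -> size s = #|T| -> forall v, v \in s.
Proof.
move=> us sz v; apply: contraT => vs.
by have := max_card (mem (v :: s)); rewrite (card_uniqP _) /= ?vs // sz ltnn.
Qed.

Definition induced_path (x0 : T) (s : seq T) := forall i j,
  (i < size s)%N -> (j < size s)%N ->
  e (nth x0 s i) (nth x0 s j) = (i.+1 == j) || (j.+1 == i).

Hypotheses (esym : symmetric e) (eirr : irreflexive e).

Lemma induced_path_rcons x0 s w : induced_path x0 s ->
  (forall j, (j < size s)%N -> e (nth x0 s j) w = (j.+1 == size s)) ->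
  induced_path x0 (rcons s w).
Proof.
move=> ps ew i j; rewrite size_rcons !ltnS !nth_rcons.
case: (ltngtP i (size s)) => // [ilt|->] _; case: (ltngtP j (size s)) => // [jlt|->] _.
- exact: ps.
- rewrite ew //; lia.
- rewrite esym ew //; lia.
- rewrite eirr; lia.
Qed.

Lemma induced_path_iso x0 s : uniq s -> size s = #|T| -> induced_path x0 s ->
  graph_iso e (path_rel #|T|).
Proof.
move=> us sz ps; have sT := mem_uniq_full us sz.
have il v : (index v s < #|T|)%N by rewrite -sz index_mem.
exists (fun v => Ordinal (il v)); split.
  exists (fun i : 'I_#|T| => nth x0 s i) => [v|i]; first by rewrite /= nth_index.
  by apply: val_inj; rewrite /= index_uniq // sz.
by move=> v w; rewrite /path_rel /= -ps ?sz // !nth_index.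
Qed.

Lemma star_centre : (0 < #|T|)%N ->
  graph_iso e (star_rel #|T|) -> exists b, forall u v, e u v = ((u == b) != (v == b)).
Proof.
move=> n0 [g [[h gK hK] ge]]; exists (h (Ordinal n0)) => u v.
have g0 w : (val (g w) == 0%N) = (w == h (Ordinal n0)).
  by rewrite -(can2_eq gK hK); apply/eqP/eqP => [g0|->] //; apply: val_inj.
by rewrite -ge /star_rel !g0.
Qed.

Lemma star_iso b :
  (forall u v, e u v = ((u == b) != (v == b))) -> graph_iso e (star_rel #|T|).
Proof.
move=> star; have n0 : (0 < #|T|)%N by apply/card_gt0P; exists b.
pose t := tperm (enum_rank b) (Ordinal n0); pose g v := t (enum_rank v).
have gK : cancel g (fun i => enum_val (t i)) by move=> v; rewrite /g tpermK enum_rankK.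
have g0 v : (val (g v) == 0%N) = (v == b).
  have gb : g b = Ordinal n0 by rewrite /g /t tpermL.
  by rewrite -[0%N]/(val (Ordinal n0)) val_eqE -gb (inj_eq (can_inj gK)).
exists g; split; last by move=> u v; rewrite /star_rel !g0 star.
by exists (fun i => enum_val (t i)) => // i; rewrite /g enum_valK tpermK.
Qed.

End Paths.

Section Greedy.
Variables (R : realType) (T : finType) (e : rel T).
Hypotheses (esym : symmetric e) (eirr : irreflexive e).
Variables (y : T -> R) (p : T) (g : R).
Hypotheses (yp : y p = 1) (g0 : 0 <= g) (ylip : forall a b, e a b -> y a - g <= y b).
(* [lra] ignores section hypotheses, hence the occasional [have := g0]. *)

Definition path_state (s : seq T) := [/\ uniq s, induced_path e p s,
  forall i, (i < size s)%N -> 1 - i%:R * g <= y (nth p s i) &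
  (size s)%:R - g * 'C(size s, 2)%:R <= \sum_(v <- s) y v].

Definition gain_state (s : seq T) := [/\ uniq s,
  forall v, v \in s -> 1 - (size s)%:R * g + g <= y v &
  (size s)%:R - g * 'C(size s, 2)%:R + g <= \sum_(v <- s) y v].

Lemma gain_state_rcons s a w : gain_state s -> a \in s -> w \notin s -> e a w ->
  gain_state (rcons s w).
Proof.
case=> us yb ys ais wns eaw; have ywa := ylip eaw; have yal := yb a ais.
rewrite /gain_state size_rcons -natr1 mulrDl mul1r; split.
- by rewrite rcons_uniq wns us.
- move=> v; rewrite mem_rcons inE => /predU1P[->|/yb yv]; first lra.
  have := g0; lra.
- by rewrite -cats1 big_cat big_seq1 /= natr_binS2 mulrDr; lra.
Qed.

Lemma path_state_shortcut s i w : path_state s -> (i.+1 < size s)%N ->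
  w \notin s -> e (nth p s i) w -> gain_state (rcons s w).
Proof.
case=> us _ yb ys ik wns eiw; have := ylip eiw; have := yb i (ltnW ik).
have ik' : (i%:R + 1) * g <= ((size s)%:R - 1) * g.
  by rewrite ler_wpM2r // lerBrDr !natr1 ler_nat.
rewrite mulrDl mulrBl !mul1r in ik' => ywi ywl; split.
- by rewrite rcons_uniq wns us.
- move=> v; rewrite size_rcons -natr1 mulrDl mul1r mem_rcons inE.
  case/predU1P=> [->|vs]; first by have := g0; lra.
  have ivs : (index v s < size s)%N by rewrite index_mem.
  have := yb _ ivs; rewrite nth_index //.
  have : (index v s)%:R * g <= (size s)%:R * g by rewrite ler_wpM2r // ler_nat ltnW.
  lra.
- by rewrite size_rcons -cats1 big_cat big_seq1 /= natr_binS2 -natr1 mulrDr; lra.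
Qed.

Lemma path_state_rcons s w : path_state s -> (0 < size s)%N -> w \notin s ->
  (forall j, (j < size s)%N -> e (nth p s j) w = (j.+1 == size s)) ->
  path_state (rcons s w).
Proof.
case=> us ps yb ys s0 wns ew; have sk : ((size s).-1 < size s)%N by rewrite ltn_predL.
have kR : ((size s).-1)%:R = (size s)%:R - 1 :> R.
  by rewrite -[in RHS](prednK s0) -natr1 addrK.
have := yb _ sk; rewrite kR mulrBl mul1r => ylast.
have := @ylip (nth p s (size s).-1) w; rewrite ew // prednK // eqxx => /(_ isT) ywl.
split.
- by rewrite rcons_uniq wns us.
- exact: induced_path_rcons.
- move=> i; rewrite size_rcons ltnS leq_eqVlt nth_rcons.
  case/predU1P=> [->|ilt]; last by rewrite ilt; exact: yb.
  by rewrite ltnn eqxx; lra.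
- by rewrite size_rcons -cats1 big_cat big_seq1 /= natr_binS2 -natr1 mulrDr; lra.
Qed.

Lemma path_state1 : path_state [:: p].
Proof.
split=> //=.
- by move=> [|i] [|j] //= _ _; rewrite eirr.
- by move=> [|i] //= _; rewrite mul0r subr0 yp.
- by rewrite big_seq1 yp mulr0 subr0.
Qed.

Hypothesis econ : connected_graph e.

Lemma exists_edge_out s : (0 < size s < #|T|)%N ->
  exists a w, [/\ a \in s, w \notin s & e a w].
Proof.
case/andP=> s0 sn; have [w0 w0s] := exists_notin sn.
have a0s : nth p s 0 \in s by rewrite mem_nth.
exact: (connect_cross (S := mem s) (econ _ w0) a0s w0s).
Qed.

Lemma path_state_step s : path_state s -> (0 < size s < #|T|)%N ->
  exists w, gain_state (rcons s w) \/ path_state (rcons s w).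
Proof.
move=> ps sn; have [a [w [ais wns eaw]]] := exists_edge_out sn.
case: (boolP [exists i : 'I_(size s), exists w',
                [&& (i.+1 < size s)%N, w' \notin s & e (nth p s i) w']]).
  case/existsP=> i /existsP[w' /and3P[ik w's eiw]].
  by exists w'; left; exact: path_state_shortcut ps ik w's eiw.
move/existsPn=> nosc.
have {}nosc j w' : (j.+1 < size s)%N -> w' \notin s -> ~~ e (nth p s j) w'.
  move=> jk w's; apply: contraT; rewrite negbK => ejw.
  by have /existsPn/(_ w') := nosc (Ordinal (ltnW jk)); rewrite /= jk w's ejw.
have ia : (index a s).+1 = size s.
  have ias : (index a s < size s)%N by rewrite index_mem.
  apply/eqP; rewrite eqn_leq ias /= leqNgt; apply: contraT; rewrite negbK => lt.
  by have := nosc _ _ lt wns; rewrite nth_index // eaw.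
exists w; right; apply: path_state_rcons => //; first by case/andP: sn.
move=> j js; case: (ltngtP j.+1 (size s)) => [jk|sj|jk]; first exact/negbTE/nosc.
  by move: sj; rewrite ltnNge js.
by move: jk; rewrite -ia => -[->]; rewrite nth_index.
Qed.

Lemma greedy_state k : (0 < k <= #|T|)%N ->
  exists s, size s = k /\ (gain_state s \/ path_state s).
Proof.
elim: k => [//|[|k] IHk] /andP[_ kn].
  by exists [:: p]; split=> //; right; exact: path_state1.
have [s [sk st]] := IHk (ltnW kn).
have sn : (0 < size s < #|T|)%N by rewrite sk.
case: st => [gs|ps].
  have [a [w [ais wns eaw]]] := exists_edge_out sn.
  exists (rcons s w); rewrite size_rcons sk; split=> //; left.
  exact: gain_state_rcons gs ais wns eaw.
have [w st] := path_state_step ps sn.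
by exists (rcons s w); rewrite size_rcons sk.
Qed.

Lemma greedy_sum_bound : \sum_v y v = 0 ->
  #|T|%:R - g * 'C(#|T|, 2)%:R <= 0 /\
  (#|T|%:R - g * 'C(#|T|, 2)%:R + g <= 0 \/ graph_iso e (path_rel #|T|)).
Proof.
move=> sy; have n0 : (0 < #|T|)%N by apply/card_gt0P; exists p.
have [s [sn st]] := greedy_state (introT andP (conj n0 (leqnn _))).
have sE : uniq s -> \sum_(v <- s) y v = 0.
  by move=> us; rewrite big_uniq // -[RHS]sy; apply: eq_bigl => v; rewrite mem_uniq_full.
case: st => [[us _ ys]|[us ps _ ys]]; rewrite sn sE // in ys.
  by split; [have := g0; lra | left].
by split=> //; right; exact: induced_path_iso ps.
Qed.

End Greedy.

Section Levels.
Variables (T : finType) (e : rel T).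

Definition leaf_level (a b v : T) : nat := if v == a then 0 else if v == b then 1 else 2.

Lemma sum_nat_pred1 (a : T) : (\sum_v (v == a : nat) = 1)%N.
Proof. by rewrite (bigD1 a) //= eqxx big1 // => v /negbTE ->. Qed.

Lemma sum_leaf_level a b : a != b -> (\sum_v leaf_level a b v = 2 * #|T| - 3)%N.
Proof.
move=> ab; have cE v : (leaf_level a b v + ((v == a) * 2 + (v == b)) = 2)%N.
  by rewrite /leaf_level; case: (eqVneq v a) => [->|_]; [rewrite (negbTE ab) | case: eqP].
have : (\sum_v (leaf_level a b v + ((v == a) * 2 + (v == b))) = \sum_(v : T) 2)%N.
  by apply: eq_bigr => v _; exact: cE.
rewrite !big_split /= -big_distrl /= !sum_nat_pred1 sum_nat_const.
by rewrite (_ : #|xpredT| = #|T|) //; lia.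
Qed.

Lemma leaf_level_le2 a b v : (leaf_level a b v <= 2)%N.
Proof. by rewrite /leaf_level; case: ifP => //; case: ifP. Qed.

Lemma leaf_level_edge a b x y : (forall w, e a w -> w = b) -> e x y ->
  (leaf_level a b y <= (leaf_level a b x).+1)%N.
Proof.
move=> leaf exy; rewrite /leaf_level.
case: (eqVneq x a) => [xa|xa]; first by rewrite (leaf y) -?xa // eqxx; case: ifP.
by case: ifP => //; case: ifP; case: ifP.
Qed.

End Levels.

Section Bounds.
Variables (R : realType) (T : finType) (e : rel T).
Hypotheses (esym : symmetric e) (eirr : irreflexive e).

Lemma leaf_upper a b : (3 <= #|T|)%N -> e a b -> (forall w, e a w -> w = b) ->
  exists x : T -> R, feasible x /\ gamma_x e x <= #|T|%:R / (2 * #|T| - 3)%:R.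
Proof.
move=> n3 eab leaf; have ab : a != b by apply: contraTneq eab => ->; rewrite eirr.
apply: (@level_feasible R T e esym (leaf_level a b) a); first by rewrite /leaf_level eqxx.
- exact: sum_leaf_level.
- lia.
- move=> v; apply: leq_trans (leq_mul (leaf_level_le2 a b v) (leqnn _)) _; lia.
- by move=> x y; apply: leaf_level_edge.
Qed.

Lemma leaf_upper_strict a b f : (4 <= #|T|)%N -> e a b -> (forall w, e a w -> w = b) ->
  f != b -> ~~ e b f ->
  exists x : T -> R, feasible x /\ gamma_x e x <= #|T|%:R / (2 * #|T| - 2)%:R.
Proof.
move=> n4 eab leaf fb nbf; have ab : a != b by apply: contraTneq eab => ->; rewrite eirr.
have fa : f != a by apply: contraNneq nbf => ->; rewrite esym.
apply: (@level_feasible R T e esym (fun v => leaf_level a b v + (v == f))%N a).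
- by rewrite /leaf_level eqxx eq_sym (negbTE fa).
- by rewrite big_split /= sum_nat_pred1 sum_leaf_level //; move: n4; set n := #|T|; lia.
- lia.
- move=> v; have c3 : (leaf_level a b v + (v == f) <= 3)%N.
    by have := leaf_level_le2 a b v; case: (v == f); lia.
  by apply: leq_trans (leq_mul c3 (leqnn _)) _; move: n4; set n := #|T|; lia.
- move=> x y exy; case: (eqVneq y f) => [yf|_]; last first.
    by rewrite addn0 (leq_trans (leaf_level_edge leaf exy)) // ltnS leq_addr.
  subst y; have xa : x != a by apply: contraNneq fb => xa; rewrite -(leaf f) -?xa.
  have xb : x != b by apply: contraNneq nbf => <-.
  have xf : x != f by apply: contraTneq exy => ->; rewrite eirr.
  by rewrite /leaf_level (negbTE xa) (negbTE xb) (negbTE xf) (negbTE fa) (negbTE fb).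
Qed.

Lemma radius2_lower (y : T -> R) p q g : y p = 1 -> 0 <= g ->
  (forall a b, e a b -> y a - g <= y b) -> e p q ->
  (forall v, v != p -> e p v \/ exists u, e p u /\ e u v) ->
  #|T|%:R - g * (2 * #|T| - 3)%:R <= \sum_v y v.
Proof.
move=> yp g0 ylip epq near; have pq : p != q by apply: contraTneq epq => ->; rewrite eirr.
have yv v : 1 - (leaf_level p q v)%:R * g <= y v.
  rewrite /leaf_level; case: (eqVneq v p) => [->|vp]; first by rewrite yp mul0r subr0.
  case: (eqVneq v q) => [->|_]; first by have := ylip _ _ epq; rewrite yp mul1r.
  by case: (near v vp) => [/ylip pv|[u [/ylip pu /ylip uv]]]; lra.
apply: le_trans (ler_sum _ (fun v _ => yv v)).
by rewrite sumrB sumr_const -mulr_suml -natr_sum sum_leaf_level // mulrC.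
Qed.

Lemma star_lower b (x : T -> R) : (1 < #|T|)%N ->
  (forall u v, e u v = ((u == b) != (v == b))) -> feasible x ->
  #|T|%:R / (2 * #|T| - 3)%:R <= gamma_x e x.
Proof.
move=> n2 star fx; have [y [p [yp sy <-]]] := feasible_normalize e fx.
have [q epq] : exists q, e p q.
  case: (eqVneq p b) => [->|pb]; last by exists b; rewrite star eqxx (negbTE pb).
  have [q] := @exists_notin _ [:: b] n2; rewrite inE => /negbTE qb.
  by exists q; rewrite star eqxx qb.
have near v : v != p -> e p v \/ exists u, e p u /\ e u v.
  case: (eqVneq p b) => [-> vb|pb vp]; first by left; rewrite star eqxx (negbTE vb).
  case: (eqVneq v b) => [->|vb]; first by left; rewrite star eqxx (negbTE pb).
  by right; exists b; rewrite !star eqxx (negbTE pb) (negbTE vb).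
have := radius2_lower yp (gamma_x_ge0 e y) (@gamma_x_lip _ _ e y) epq near.
by rewrite sy ler_pdivrMr ?ltr0n; [lra | lia].
Qed.

Lemma gamma_x_lower (x : T -> R) : connected_graph e -> (3 <= #|T|)%N -> feasible x ->
  #|T|%:R / 'C(#|T|, 2)%:R <= gamma_x e x /\
  (graph_iso e (path_rel #|T|) \/ #|T|%:R / ('C(#|T|, 2) - 1)%:R <= gamma_x e x).
Proof.
move=> econ n3 fx; have [y [p [yp sy <-]]] := feasible_normalize e fx.
have C1 : (1 < 'C(#|T|, 2))%N by have := bin2_mul2 #|T|; nia.
have [lb gain] := greedy_sum_bound esym eirr yp (gamma_x_ge0 e y) (@gamma_x_lip _ _ e y) econ sy.
split; first by rewrite ler_pdivrMr ?ltr0n 1?ltnW //; lra.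
case: gain => [gain|]; [right | by left].
by rewrite ler_pdivrMr ?ltr0n ?subn_gt0 // natrB 1?ltnW //; lra.
Qed.

Lemma path_upper : (1 < #|T|)%N -> graph_iso e (path_rel #|T|) ->
  exists x : T -> R, feasible x /\ gamma_x e x <= #|T|%:R / 'C(#|T|, 2)%:R.
Proof.
move=> n2 [g [[h gK hK] ge]]; have n0 : (0 < #|T|)%N by lia.
apply: (@level_feasible R T e esym (fun v => val (g v)) (h (Ordinal n0))).
- by rewrite hK.
- rewrite (reindex h) /=; last by exists g => i _; [rewrite hK|rewrite gK].
  by under eq_bigr do rewrite hK; rewrite -(big_mkord xpredT id) bin2_sum.
- by have := bin2_mul2 #|T|; nia.
- move=> v; rewrite mulnC [(2 * _)%N]mulnC bin2_mul2 leq_mul2l.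
  by rewrite -ltnS prednK // ltn_ord orbT.
- by move=> a b; rewrite -ge /path_rel /= => /orP[] /eqP; lia.
Qed.

End Bounds.

Section Tree.
Variables (R : realType) (T : finType) (e : rel T).
Hypotheses (esym : symmetric e) (eirr : irreflexive e).
Hypotheses (econ : connected_graph e) (eacy : acyclic_graph e) (n3 : (3 <= #|T|)%N).

Lemma tree_feasible_upper :
  exists x : T -> R, feasible x /\ gamma_x e x <= #|T|%:R / (2 * #|T| - 3)%:R.
Proof.
have [a [b [eab leaf]]] := exists_leaf esym eirr eacy econ (ltnW n3).
exact: (leaf_upper R esym eirr n3 eab leaf).
Qed.

Lemma tree_gamma_upper : gamma R e <= #|T|%:R / (2 * #|T| - 3)%:R.
Proof. by have [x [fx xu]] := tree_feasible_upper; exact: le_trans (gamma_le e fx) xu. Qed.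

Lemma tree_gamma_lower : #|T|%:R / 'C(#|T|, 2)%:R <= gamma R e.
Proof.
have [x0 [fx0 _]] := tree_feasible_upper.
by apply: (gamma_ge fx0) => x fx; case: (gamma_x_lower esym eirr econ n3 fx).
Qed.

Lemma tree_gamma_path : gamma R e = #|T|%:R / 'C(#|T|, 2)%:R <-> graph_iso e (path_rel #|T|).
Proof.
split=> [gE|iso]; last first.
  apply/le_anti; rewrite tree_gamma_lower andbT.
  by have [x [fx xu]] := path_upper R esym (ltnW n3) iso; exact: le_trans (gamma_le e fx) xu.
have [//|niso] := pselect (graph_iso e (path_rel #|T|)); exfalso.
have [x0 [fx0 _]] := tree_feasible_upper.
have : #|T|%:R / ('C(#|T|, 2) - 1)%:R <= gamma R e.
  by apply: (gamma_ge fx0) => x fx; case: (gamma_x_lower esym eirr econ n3 fx) => _ [].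
have C1 : (1 < 'C(#|T|, 2))%N by move: n3 (bin2_mul2 #|T|); set n := #|T|; nia.
apply/negP; rewrite -ltNge gE ltr_div_nat ?(ltnW (ltnW n3)) //.
by rewrite subn_gt0 C1 ltn_subrL (ltnW C1).
Qed.

Lemma universal_star b : (forall w, w != b -> e b w) -> graph_iso e (star_rel #|T|).
Proof.
move=> ebw; apply: (star_iso (b := b)) => u v.
case: (eqVneq u b) => [->|ub]; case: (eqVneq v b) => [->|vb] /=; rewrite ?eirr ?ebw //.
  by rewrite esym ebw.
exact/negbTE/(triangle_free esym eirr eacy (ebw _ ub) (ebw _ vb)).
Qed.

Lemma leaf_gamma_lt a b f : e a b -> (forall w, e a w -> w = b) -> f != b -> ~~ e b f ->
  gamma R e < #|T|%:R / (2 * #|T| - 3)%:R.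
Proof.
move=> eab leaf fb nbf; have [w efw] := exists_neighbour f econ (ltnW n3).
have ab : a != b by apply: contraTneq eab => ->; rewrite eirr.
have af : a != f by apply: contraNneq nbf => <-; rewrite esym.
have aw : a != w by apply: contraNneq fb => aw; rewrite -(leaf f) // esym aw.
have bw : b != w by apply: contraNneq nbf => ->; rewrite esym.
have fw : f != w by apply: contraTneq efw => <-; rewrite eirr.
have n4 : (4 <= #|T|)%N.
  have := max_card (mem [:: a; b; f; w]).
  by rewrite (card_uniqP _) //= !inE !negb_or ab af aw (eq_sym b f) fb bw fw.
have [x [fx xu]] := leaf_upper_strict R esym eirr n4 eab leaf fb nbf.
apply: le_lt_trans (le_trans (gamma_le e fx) xu) _.
by apply: ltr_div_nat; move: n4; set n := #|T|; lia.
Qed.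

Lemma tree_gamma_star : gamma R e = #|T|%:R / (2 * #|T| - 3)%:R <-> graph_iso e (star_rel #|T|).
Proof.
split=> [gE|iso]; last first.
  apply/le_anti; rewrite tree_gamma_upper /=.
  have [b star] := star_centre (ltnW (ltnW n3)) iso.
  have [x0 [fx0 _]] := tree_feasible_upper.
  by apply: (gamma_ge fx0) => x; apply: star_lower (ltnW n3) star.
have [a [b [eab leaf]]] := exists_leaf esym eirr eacy econ (ltnW n3).
case: (boolP [forall v, (v == b) || e b v]) => [/forallP univ|/forallPn[f]].
  by apply: (universal_star (b := b)) => w wb; have := univ w; rewrite (negbTE wb).
by rewrite negb_or => /andP[fb nbf]; have := leaf_gamma_lt eab leaf fb nbf; rewrite gE ltxx.
Qed.

End Tree.

Theorem theorem4p8 (R : realType) (T : finType) (e : rel T) :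
  is_tree e -> (3 <= #|T|)%N ->
  [/\ 2 / (#|T|.-1)%:R <= gamma R e,
      gamma R e <= #|T|%:R / (2 * #|T| - 3)%:R,
      gamma R e = 2 / (#|T|.-1)%:R <-> graph_iso e (path_rel #|T|)
    & gamma R e = #|T|%:R / (2 * #|T| - 3)%:R <-> graph_iso e (star_rel #|T|)].
Proof.
move=> [[esym eirr] [econ eacy]] n3; rewrite -bin2_div; last exact: ltnW.
split; first exact: tree_gamma_lower.
- exact: tree_gamma_upper.
- exact: tree_gamma_path.
- exact: tree_gamma_star.
Qed.
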